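(* Let $N:[0,\infty)\to\mathbb R$, $T>0$, $A>0$, an integer $\ell\ge0$, $\delta>0$, and a finite set $\mathcal T\subset[0,T]$ with $\operatorname{sep}(\mathcal T)\ge4(\ell+1)\delta$ be given. Let \[ \widehat{\mathcal T}\subset\Big\{t\in[0,T]:\Big|\tfrac1\delta\Delta^{(\ell+1)}_\delta N(t)\Big|\ge\tfrac A2\Big\} \] be a subset of maximal size satisfying $\operatorname{sep}(\widehat{\mathcal T})>2(\ell+1)\delta$. If \[ \mathcal T\subseteq\Big\{t\in[\ell\delta,T]:\Big|\tfrac1\delta\Delta^{(\ell+1)}_\delta N(t)\Big|\ge\tfrac A2\Big\}\subseteq\big\{t\in[0,T]:\exists t'\in\mathcal T\text{ with }|t-t'|\le(\ell+1)\delta\big\}, \] then $|\mathcal T|=|\widehat{\mathcal T}|$ and $d_{\max}(\mathcal T,\widehat{\mathcal T})\le2(\ell+1)\delta$.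
   Context: $\Delta^{(j)}_\delta N(t):=\sum_{i=0}^{j}(-1)^{j-i}\binom{j}{i}N(t+(i-j+1)\delta)$, defined for $t\ge(j-1)\delta$ (sets above consist of $t$ where it is defined). $\operatorname{sep}(S):=\min\{|a-b|:a,b\in S,a\ne b\}$, $=\infty$ if no such pair. For finite $\mathcal S,\mathcal T$ with $|\mathcal S|=|\mathcal T|$: $d_{\max}=0$ if both empty, otherwise with sorted elements $s_1<\dots<s_k$, $t_1<\dots<t_k$, $d_{\max}(\mathcal S,\mathcal T)=\max_i|s_i-t_i|$. *)

From HB Require Import structures.
From mathcomp Require Import all_boot all_order all_algebra.
From mathcomp Require Import reals constructive_ereal.
Set Implicit Arguments. Unset Strict Implicit. Unset Printing Implicit Defensive.
Import Order.TTheory GRing.Theory Num.Theory.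
Local Open Scope ring_scope.

Definition fdiff (R : realType) (N : R -> R) (delta : R) (j : nat) (t : R) : R :=
  \sum_(i < j.+1)
     (-1) ^+ (j - i) * ('C(j, i))%:R * N (t + ((i%:R - j%:R + 1) * delta)).

(* sep(S) = min{|a-b| : a,b in S, a <> b}, = +oo if no such pair.
   Finite sets are represented by duplicate-free sequences. *)
Definition sep (R : realType) (s : seq R) : \bar R :=
  \big[mine/+oo%E]_(a <- s) \big[mine/+oo%E]_(b <- s | a != b) (`|a - b|)%:E.

Definition dmax (R : realType) (s t : seq R) : R :=
  \big[Num.max/0]_(i < size s)
     `|nth 0 (sort <=%R s) i - nth 0 (sort <=%R t) i|.

From HB Require Import structures.
From mathcomp Require Import all_boot all_order all_algebra.
From mathcomp Require Import reals constructive_ereal.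
From mathcomp Require Import lra.
Set Implicit Arguments. Unset Strict Implicit. Unset Printing Implicit Defensive.
Import Order.TTheory GRing.Theory Num.Theory.
Local Open Scope ring_scope.

(* Every point h of the estimated set lies within eps := (l+1) delta of the
   true set, by the sandwich hypothesis.  Sending h to such a point is
   injective because the estimated points are more than 2 eps apart, and
   order preserving because the true points are at least 2 eps apart.  By
   maximality the true set, being 4 eps separated, is no larger than the
   estimated one, so this map is an order isomorphism onto the true set:
   the sorted lists correspond entrywise, within eps. *)

Lemma sep_le_dist (R : realType) (s : seq R) a b :
  a \in s -> b \in s -> a != b -> (sep s <= (`|a - b|)%:E)%E.
Proof.
by move=> sa sb ab; apply: (bigmin_inf_seq _ _ _ _ _ sa) => //; exact: ge_bigmin_seq.
Qed.

Lemma le_sep_dist (R : realType) (s : seq R) c a b :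
  (c%:E <= sep s)%E -> a \in s -> b \in s -> a != b -> c <= `|a - b|.
Proof. by move=> cs sa sb ab; rewrite -lee_fin (le_trans cs) ?sep_le_dist. Qed.

Lemma lt_sep_dist (R : realType) (s : seq R) c a b :
  (c%:E < sep s)%E -> a \in s -> b \in s -> a != b -> c < `|a - b|.
Proof. by move=> cs sa sb ab; rewrite -lte_fin (lt_le_trans cs) ?sep_le_dist. Qed.

Lemma dmax_le (R : realType) (s t : seq R) c : 0 <= c ->
  (forall i, (i < size s)%N ->
     `|nth 0 (sort <=%R s) i - nth 0 (sort <=%R t) i| <= c) ->
  dmax s t <= c.
Proof. by move=> c0 st; apply: bigmax_le => // i _; exact: st. Qed.

Lemma map_sort_eq_sort d1 d2 (T1 : orderType d1) (T2 : orderType d2)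
    (f : T1 -> T2) (s : seq T1) (t : seq T2) :
  uniq s -> uniq t -> {in s &, injective f} ->
  {in s &, {homo f : x y / (x <= y)%O}} -> {in s, forall x, f x \in t} ->
  (size t <= size s)%N ->
  map f (sort <=%O s) = sort <=%O t.
Proof.
move=> us ut finj fhomo fst st.
have ms : sort <=%O s =i s by exact: mem_sort.
have sorted_fs : sorted <=%O (map f (sort <=%O s)).
  apply: homo_sorted_in fhomo _ (sort_sorted le_total s).
  by apply/allP => x; rewrite ms.
have uniq_fs : uniq (map f (sort <=%O s)).
  by rewrite map_inj_in_uniq ?sort_uniq // => x y; rewrite !ms; exact: finj.
have sub_fs : {subset map f (sort <=%O s) <= t}.
  by move=> _ /mapP[x xs ->]; apply: fst; rewrite -ms.
have size_fs : (size t <= size (map f (sort <=%O s)))%N.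
  by rewrite size_map size_sort.
have [_ mem_fs] := uniq_min_size uniq_fs sub_fs size_fs.
apply: le_sorted_eq sorted_fs (sort_sorted le_total t) _.
by apply: uniq_perm; rewrite ?sort_uniq // => x; rewrite mem_fs mem_sort.
Qed.

(* When no point of [t] is within [eps] of [h], this is the junk value [0]. *)
Definition pick_near (R : realDomainType) (eps : R) (t : seq R) (h : R) : R :=
  nth 0 t (find (fun x => `|h - x| <= eps) t).

Section PickNear.
Variables (R : realDomainType) (eps : R) (s t : seq R).
Hypothesis s_near_t : {in s, forall h, exists2 x, x \in t & `|h - x| <= eps}.
Let f := pick_near eps t.

Lemma has_near h : h \in s -> has (fun x => `|h - x| <= eps) t.
Proof. by move=> /s_near_t[x xt hx]; apply/hasP; exists x. Qed.

Lemma pick_near_mem : {in s, forall h, f h \in t}.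
Proof. by move=> h /has_near; rewrite has_find; exact: mem_nth. Qed.

Lemma pick_near_dist : {in s, forall h, `|h - f h| <= eps}.
Proof. by move=> h /has_near /(nth_find 0). Qed.

Lemma pick_near_inj :
  {in s &, forall x y, x != y -> 2 * eps < `|x - y|} -> {in s &, injective f}.
Proof.
move=> s_sep x y xs ys fxy; apply/eqP; apply: contraT => /(s_sep _ _ xs ys).
have := pick_near_dist xs; have := pick_near_dist ys.
by rewrite fxy !ler_norml ltr_normr => /andP[? ?] /andP[? ?] /orP[] ?; lra.
Qed.

Lemma pick_near_homo :
  {in t &, forall x y, x != y -> 2 * eps <= `|x - y|} ->
  {in s &, {homo f : x y / x <= y}}.
Proof.
move=> t_sep x y xs ys; rewrite le_eqVlt => /predU1P[->//|xy].
rewrite leNgt; apply/negP => fyx.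
have := t_sep _ _ (pick_near_mem xs) (pick_near_mem ys) (negbT (gt_eqF fyx)).
have := pick_near_dist xs; have := pick_near_dist ys.
by rewrite !ler_norml ler_normr => /andP[? ?] /andP[? ?] /orP[] ?; lra.
Qed.

End PickNear.

Lemma near_separated_dmax (R : realType) (eps : R) (s t : seq R) :
  0 <= eps -> uniq s -> uniq t -> (size t <= size s)%N ->
  {in s, forall h, exists2 x, x \in t & `|h - x| <= eps} ->
  {in s &, forall x y, x != y -> 2 * eps < `|x - y|} ->
  {in t &, forall x y, x != y -> 2 * eps <= `|x - y|} ->
  size t = size s /\ dmax t s <= eps.
Proof.
move=> eps0 us ut st near s_sep t_sep.
have fs := map_sort_eq_sort us ut (pick_near_inj near s_sep)
  (pick_near_homo near t_sep) (pick_near_mem near) st.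
have sz : size s = size t by rewrite -(size_sort <=%O t) -fs size_map size_sort.
split=> //; apply: dmax_le => // i it.
have si : nth 0 (sort <=%O s) i \in s.
  by rewrite -(mem_sort <=%O) mem_nth // size_sort sz.
by rewrite -fs (nth_map 0) ?size_sort ?sz // distrC (pick_near_dist near).
Qed.

Theorem proposition3p2 (R : realType) (N : R -> R) (Tm A delta : R) (l : nat)
  (Ts hatTs : seq R) :
  0 < Tm -> 0 < A -> 0 < delta ->
  uniq Ts -> (forall t, t \in Ts -> 0 <= t <= Tm) ->
  ((4 * (l.+1)%:R * delta)%:E <= sep Ts)%E ->
  (* hatTs : a subset of maximal size of the superlevel set, with sep > 2(l+1)delta *)
  uniq hatTs ->
  (forall t, t \in hatTs ->
     [/\ 0 <= t <= Tm, l%:R * delta <= t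
       & A / 2 <= `|delta^-1 * fdiff N delta l.+1 t|]) ->
  ((2 * (l.+1)%:R * delta)%:E < sep hatTs)%E ->
  (forall U : seq R, uniq U ->
     (forall t, t \in U ->
        [/\ 0 <= t <= Tm, l%:R * delta <= t
          & A / 2 <= `|delta^-1 * fdiff N delta l.+1 t|]) ->
     ((2 * (l.+1)%:R * delta)%:E < sep U)%E ->
     (size U <= size hatTs)%N) ->
  (* the sandwich hypothesis *)
  (forall t, t \in Ts ->
     l%:R * delta <= t <= Tm /\ A / 2 <= `|delta^-1 * fdiff N delta l.+1 t|) ->
  (forall t, l%:R * delta <= t <= Tm ->
     A / 2 <= `|delta^-1 * fdiff N delta l.+1 t| ->
     0 <= t <= Tm /\ exists2 t', t' \in Ts & `|t - t'| <= (l.+1)%:R * delta) ->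
  size Ts = size hatTs /\ dmax Ts hatTs <= 2 * (l.+1)%:R * delta.
Proof.
move=> _ _ delta_gt0 uTs Ts_range sepTs uhatTs hatTs_level sep_hatTs maxH
  Ts_level level_near_Ts.
rewrite -!mulrA in sepTs sep_hatTs *.
set eps := (l.+1)%:R * delta in sepTs sep_hatTs level_near_Ts *.
have eps_gt0 : 0 < eps by rewrite mulr_gt0 ?ltr0Sn.
have Ts_sep : {in Ts &, forall x y, x != y -> 2 * eps <= `|x - y|}.
  by move=> x y xT yT xy; have := le_sep_dist sepTs xT yT xy; lra.
have hatTs_sep : {in hatTs &, forall x y, x != y -> 2 * eps < `|x - y|}.
  by move=> x y xH yH; exact: lt_sep_dist sep_hatTs xH yH.
have hatTs_near : {in hatTs, forall h, exists2 x, x \in Ts & `|h - x| <= eps}.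
  move=> h /hatTs_level[/andP[_ hTm] hl hA].
  by apply: (proj2 (level_near_Ts h _ hA)); apply/andP.
have size_le : (size Ts <= size hatTs)%N.
  apply: maxH => // [t tTs|].
    by have [/andP[? ?] ?] := Ts_level t tTs; have := Ts_range t tTs; split.
  by rewrite -mulrA -/eps (lt_le_trans _ sepTs) // lte_fin; lra.
have [-> dmax_le_eps] := near_separated_dmax (ltW eps_gt0) uhatTs uTs size_le
  hatTs_near hatTs_sep Ts_sep.
by split=> //; lra.
Qed.
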